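(* Let $G$ be an arbitrary group and $E$ a real Banach space. Then $KJ(G;E)=PJ(G;E)\oplus B(G;E)$ (direct sum of linear subspaces).
   Context: $KJ(G;E)$ is the real vector space of functions $f\colon G\to E$ for which there exists $c>0$ with $\|f(xy)+f(xy^{-1})-2f(x)\|\le c$ for all $x,y\in G$ (quasi-Jensen functions). $PJ(G;E)$ is the subspace of $f\in KJ(G;E)$ with $f(x^n)=nf(x)$ for all $x\in G$, $n\in\mathbb{Z}$ (pseudo-Jensen functions). $B(G;E)$ is the space of bounded functions $G\to E$. *)

From HB Require Import structures.
From mathcomp Require Import all_boot all_order all_algebra.
From mathcomp Require Import all_classical all_reals all_analysis.
Set Implicit Arguments. Unset Strict Implicit. Unset Printing Implicit Defensive.
Import Order.TTheory GRing.Theory Num.Theory.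
Import numFieldNormedType.Exports.
Local Open Scope ring_scope.

Definition gpowz (G : groupType) (x : G) (n : int) : G :=
  match n with
  | Posz k => (x ^+ k)%g
  | Negz k => (x ^- k.+1)%g
  end.

Section Jensen.
Variables (R : realType) (G : groupType) (E : normedModType R).

Definition quasi_jensen (f : G -> E) : Prop :=
  exists c : R, 0 < c /\
    forall x y : G, `| f (x * y)%g + f (x * y^-1)%g - f x *+ 2 | <= c.

Definition pseudo_jensen (f : G -> E) : Prop :=
  quasi_jensen f /\ forall (x : G) (n : int), f (gpowz x n) = f x *~ n.

Definition bounded_map (f : G -> E) : Prop :=
  exists M : R, forall x : G, `| f x | <= M.
End Jensen.

From HB Require Import structures.
From mathcomp Require Import all_boot all_order all_algebra.
From mathcomp Require Import all_classical all_reals all_analysis.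
From mathcomp Require Import lra.
Import Order.TTheory GRing.Theory Num.Theory.
Import numFieldNormedType.Exports.
Set Implicit Arguments.
Unset Strict Implicit.
Unset Printing Implicit Defensive.
Local Open Scope ring_scope.
Local Open Scope classical_set_scope.

(* Hyers' method.  Taking y = x in the quasi-Jensen inequality shows that
   f(x^2) - 2 f(x) is bounded, so 2^-n f(x^(2^n)) is a Cauchy sequence whose
   limit p stays at bounded distance from f; hence p is again quasi-Jensen and
   p(x^2) = 2 p(x).  For commuting u, v the Jensen defect of p at (u^2, v^2) is
   twice the one at (u, v), so being bounded it vanishes, and p(x^n) = n p(x)
   follows by induction on n.  Conversely a bounded f with f(x^n) = n f(x)
   satisfies n |f(x)| <= M for all n, hence f = 0. *)

Lemma natmul_bounded_eq0 (R : archiRealFieldType) (a M : R) :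
  0 <= a -> (forall n : nat, a *+ n <= M) -> a = 0.
Proof.
move=> a_ge0 aM; apply/eqP; rewrite eq_le a_ge0 andbT leNgt; apply/negP => a_gt0.
have M_ge0 : 0 <= M by rewrite -(mulr0n a) aM.
have := archi_boundP (divr_ge0 M_ge0 (ltW a_gt0)).
rewrite ltr_pdivrMr // mulr_natl => /lt_le_trans/(_ (aM _)).
by rewrite ltxx.
Qed.

Lemma exists_half_pow_lt (R : archiRealFieldType) (c eps : R) :
  0 < eps -> exists N : nat, c * 2^-1 ^+ N < eps.
Proof.
move=> eps_gt0; exists (Num.bound (c / eps)).
rewrite exprVn -/(c / _) ltr_pdivrMr ?exprn_gt0 // mulrC -ltr_pdivrMr //.
exact: upper_nthrootP.
Qed.

Definition jensen_defect (G : groupType) (V : zmodType) (f : G -> V) (x y : G) : V :=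
  f (x * y)%g + f (x * y^-1)%g - f x *+ 2.

Lemma jensen_defectD (G : groupType) (V : zmodType) (f g : G -> V) x y :
  jensen_defect (fun z => f z + g z) x y = jensen_defect f x y + jensen_defect g x y.
Proof.
by rewrite /jensen_defect [RHS]addrACA -opprD -mulrnDl [f _ + _ + _]addrACA.
Qed.

Section QuasiJensen.
Variables (R : realType) (G : groupType) (E : normedModType R).
Implicit Types (f g : G -> E) (x y : G).

Lemma bounded_jensen_defect f (M : R) :
  (forall x, `|f x| <= M) -> forall x y, `|jensen_defect f x y| <= M *+ 4.
Proof.
move=> fM x y; apply: le_trans (ler_normB _ _) _; rewrite normrMn.
apply: le_trans (lerD (ler_normD _ _) (lexx _)) _.
have := fM (x * y)%g; have := fM (x * y^-1)%g; have := fM x.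
rewrite -mulr_natr; lra.
Qed.

Lemma bounded_quasi_jensen f : bounded_map f -> quasi_jensen f.
Proof.
case=> M fM; have M_ge0 : 0 <= M := le_trans (normr_ge0 _) (fM 1%g).
exists (M *+ 4 + 1); split; first by rewrite ltr_wpDl ?mulrn_wge0.
by move=> x y; apply: le_trans (bounded_jensen_defect fM x y) _; rewrite lerDl.
Qed.

Lemma quasi_jensenD f g :
  quasi_jensen f -> quasi_jensen g -> quasi_jensen (fun x => f x + g x).
Proof.
case=> c [c_gt0 fc] [d [d_gt0 gd]]; exists (c + d); split; first exact: addr_gt0.
move=> x y; change (`|jensen_defect (fun z => f z + g z) x y| <= c + d).
by rewrite jensen_defectD; apply: le_trans (ler_normD _ _) (lerD (fc x y) (gd x y)).
Qed.

Lemma pseudo_jensen_bounded_eq0 f : pseudo_jensen f -> bounded_map f -> f = (fun=> 0).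
Proof.
case=> _ fX [M fM]; apply: funext => x; apply/normr0_eq0.
apply: (natmul_bounded_eq0 (normr_ge0 _)) => n.
by rewrite -normrMn pmulrn -fX; apply: fM.
Qed.

End QuasiJensen.

Lemma jensen_defect_sq (G : groupType) (V : zmodType) (p : G -> V) :
  (forall x, p (x ^+ 2)%g = p x *+ 2) -> forall u v, commute u v ->
  jensen_defect p (u ^+ 2)%g (v ^+ 2)%g = jensen_defect p u v *+ 2.
Proof.
move=> p_sq u v uv; have uVv : commute u v^-1 by exact: commuteV.
by rewrite /jensen_defect -expVgn -!expgMn // !p_sq mulrnBl -mulrnDl.
Qed.

Lemma commute_jensen_defect_eq0 (R : realType) (G : groupType) (E : normedModType R)
    (p : G -> E) (C : R) :
  (forall x, p (x ^+ 2)%g = p x *+ 2) -> (forall x y, `|jensen_defect p x y| <= C) ->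
  forall u v, commute u v -> jensen_defect p u v = 0.
Proof.
move=> p_sq pC; have pow2 n u v : commute u v -> `|jensen_defect p u v| *+ 2 ^ n <= C.
  elim: n u v => [|n IHn] u v uv; first exact: pC.
  by rewrite expnS mulrnA -normrMn -jensen_defect_sq //; exact/IHn/commuteX2.
move=> u v uv; apply/normr0_eq0/(natmul_bounded_eq0 (normr_ge0 _)) => n.
apply: le_trans (pow2 n u v uv); apply: ler_wpMn2l => //.
exact/ltnW/ltn_expl.
Qed.

Section CommutingJensenPowers.
Variables (G : groupType) (V : zmodType) (p : G -> V).
Hypotheses (p1 : p 1%g = 0)
  (p_commute : forall u v, commute u v -> jensen_defect p u v = 0).

Lemma commute_jensen_invg x : p x^-1%g = - p x.
Proof.
have /eqP := p_commute (commute_sym (commute1 x)).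
by rewrite /jensen_defect !mul1g p1 mul0rn subr0 addr_eq0 => /eqP ->; rewrite opprK.
Qed.

Lemma commute_jensen_expg x k : p (x ^+ k)%g = p x *+ k.
Proof.
suff : p (x ^+ k)%g = p x *+ k /\ p (x ^+ k.+1)%g = p x *+ k.+1 by case.
elim: k => [|k [IHk IHk1]]; first by rewrite expg0 expg1 p1.
split=> //; have xkx : commute (x ^+ k.+1)%g x by exact/commute_sym/commuteX.
have xkV : (x ^+ k.+1 * x^-1 = x ^+ k)%g by rewrite expgSr mulgK.
have /eqP := p_commute xkx.
rewrite /jensen_defect -expgSr xkV IHk IHk1 subr_eq0 => /eqP xk2.
apply: (addIr (p x *+ k)); rewrite xk2 -mulrnA -mulrnDr.
by congr (_ *+ _); rewrite muln2 -addnn addSnnS addnC.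
Qed.

Lemma commute_jensen_gpowz x n : p (gpowz x n) = p x *~ n.
Proof.
case: n => k /=; first by rewrite commute_jensen_expg pmulrn.
by rewrite commute_jensen_invg commute_jensen_expg NegzE mulrNz pmulrn.
Qed.

End CommutingJensenPowers.

Section HyersSequence.
Variables (R : realType) (G : groupType) (E : normedModType R) (f : G -> E) (c : R).
Hypothesis f_sq : forall x, `|f (x ^+ 2)%g - f x *+ 2| <= c.

Definition hyers_seq n x : E := 2^-1 ^+ n *: f (x ^+ (2 ^ n))%g.

Lemma half_pow_ge0 n : 0 <= 2^-1 ^+ n :> R.
Proof. by rewrite exprn_ge0 // invr_ge0. Qed.

Lemma hyers_seq_step n x :
  `|hyers_seq n.+1 x - hyers_seq n x| <= c * 2^-1 ^+ n.+1.
Proof.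
set y := (x ^+ (2 ^ n))%g.
have -> : hyers_seq n x = 2^-1 ^+ n.+1 *: (f y *+ 2).
  by rewrite /hyers_seq -[f y *+ 2]scaler_nat scalerA exprSr -mulrA mulVf ?mulr1 ?pnatr_eq0.
rewrite /hyers_seq expnSr expgnA -/y -scalerBr normrZ ger0_norm ?half_pow_ge0 //.
by rewrite mulrC ler_wpM2r ?half_pow_ge0.
Qed.

Lemma hyers_seq_cauchy n k x :
  `|hyers_seq (n + k) x - hyers_seq n x| <= c * (2^-1 ^+ n - 2^-1 ^+ (n + k)).
Proof.
elim: k => [|k IHk]; first by rewrite addn0 !subrr normr0 mulr0.
have step := hyers_seq_step (n + k) x; rewrite addnS.
rewrite -(subrK (hyers_seq (n + k) x) (hyers_seq _ x)) -addrA.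
apply: le_trans (ler_normD _ _) _.
move: step IHk; rewrite exprSr; set t := 2^-1 ^+ (n + k); lra.
Qed.

Lemma hyers_seq0 x : hyers_seq 0 x = f x.
Proof. by rewrite /hyers_seq expr0 scale1r expg1. Qed.

Lemma hyers_seq_sq n x : hyers_seq n (x ^+ 2)%g = hyers_seq n.+1 x *+ 2.
Proof.
rewrite /hyers_seq -expgnA -expnS scalerMnl exprSr -mulrnAr.
by congr (_ *: _); rewrite -[X in _ = _ * X]mulr_natr mulVf ?mulr1 ?pnatr_eq0.
Qed.

End HyersSequence.

Section HyersLimit.
Variables (R : realType) (G : groupType) (E : completeNormedModType R) (f : G -> E) (c : R).
Hypothesis f_sq : forall x, `|f (x ^+ 2)%g - f x *+ 2| <= c.

Definition hyers_limit x : E := lim (hyers_seq f ^~ x @ \oo).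

Lemma hyers_seq_cvg x : hyers_seq f ^~ x @ \oo --> hyers_limit x.
Proof.
have c_ge0 : 0 <= c := le_trans (normr_ge0 _) (f_sq x).
apply: cauchy_cvg; apply: cauchy_exP => eps eps_gt0.
have [N cN] := exists_half_pow_lt c eps_gt0.
exists (hyers_seq f N x), N => // n /= Nn.
rewrite -ball_normE /ball_ /= -(subnKC Nn) distrC.
apply: le_lt_trans (hyers_seq_cauchy f_sq N (n - N) x) _.
by apply: le_lt_trans cN; rewrite ler_wpM2l // lerBlDr lerDl half_pow_ge0.
Qed.

Lemma hyers_limit_dist x : `|f x - hyers_limit x| <= c.
Proof.
have dist_cvg : (fun n => `|f x - hyers_seq f n x|) @ \oo --> `|f x - hyers_limit x|.
  exact: cvg_norm (cvgB (cvg_cst (f x)) (@hyers_seq_cvg x)).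
apply: (cvgr_to_le dist_cvg); apply: filterE => n.
rewrite distrC -[f x](hyers_seq0 f) -[n]add0n.
apply: le_trans (hyers_seq_cauchy f_sq 0 n x) _.
by rewrite expr0 ler_piMr ?gerBl ?half_pow_ge0 // (le_trans (normr_ge0 _) (f_sq x)).
Qed.

Lemma hyers_limit_sq x : hyers_limit (x ^+ 2)%g = hyers_limit x *+ 2.
Proof.
have shift_cvg : hyers_seq f n.+1 x @[n --> \oo] --> hyers_limit x.
  by have := @hyers_seq_cvg x; rewrite -cvg_shiftS.
apply: norm_cvg_lim; rewrite (funext (hyers_seq_sq f ^~ x)).
exact: cvgMn shift_cvg.
Qed.

End HyersLimit.

Lemma quasi_jensen_decomposition (R : realType) (G : groupType)
    (E : completeNormedModType R) (f : G -> E) :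
  quasi_jensen f -> exists2 p, pseudo_jensen p & bounded_map (fun x => f x - p x).
Proof.
case=> c [c_gt0 fc].
have f_sq x : `|f (x ^+ 2)%g - f x *+ 2| <= c + `|f 1%g|.
  have -> : f (x ^+ 2)%g - f x *+ 2 = jensen_defect f x x - f 1%g.
    by rewrite /jensen_defect mulgV addrAC addrK.
  exact: le_trans (ler_normB _ _) (lerD (fc x x) (lexx _)).
pose p := hyers_limit f.
have fp x : `|f x - p x| <= c + `|f 1%g| := hyers_limit_dist f_sq x.
have p_qj : quasi_jensen p.
  have -> : p = (fun x => f x + (p x - f x)) by apply: funext => x; rewrite addrC subrK.
  apply: quasi_jensenD; first by exists c.
  by apply: bounded_quasi_jensen; exists (c + `|f 1%g|) => x; rewrite distrC; exact: fp.
have p_sq : forall x, p (x ^+ 2)%g = p x *+ 2 := hyers_limit_sq f_sq.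
have p1 : p 1%g = 0.
  by have := p_sq 1%g; rewrite expg1n mulr2n -[X in X = _]addr0 => /addrI.
case: (p_qj) => C [_ pC]; exists p; last by exists (c + `|f 1%g|).
split=> // x n; exact/commute_jensen_gpowz/(commute_jensen_defect_eq0 p_sq pC).
Qed.

Theorem theorem2p10 (R : realType) (G : groupType) (E : completeNormedModType R) :
  (forall f : G -> E,
     quasi_jensen f <->
     exists p b : G -> E,
       pseudo_jensen p /\ bounded_map b /\ f = (fun x => p x + b x)) /\
  (forall f : G -> E,
     pseudo_jensen f -> bounded_map f -> f = (fun _ => 0)).
Proof.
split; last exact: pseudo_jensen_bounded_eq0.
move=> f; split.
- case/quasi_jensen_decomposition=> p p_pj b_bounded.
  exists p, (fun x => f x - p x); do 2!split=> //.
  by apply: funext => x; rewrite addrC subrK.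
- case=> p [b [[p_qj _] [b_bounded ->]]].
  exact: quasi_jensenD p_qj (bounded_quasi_jensen b_bounded).
Qed.
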